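(* Let $A$, $Y$, $\hat{Y}$ be random variables on a common probability space, where $A$ takes values in a finite set $\mathcal{A}$ and $Y,\hat{Y}$ take values in a finite set $\mathcal{Y}$. Identify each element of a finite value set with its one-hot vector, use the $\ell_p$-norm $\|\cdot\|_p$ ($p\ge 1$) as ground metric, and for pairs use the $\ell_p$-norm of the concatenated one-hot vectors. For $a\in\mathcal{A}$, $y\in\mathcal{Y}$ let $$\mathbf{DP}_{a,y}=\mathbb{P}(\hat{Y}=y\mid A=a)-\mathbb{P}(\hat{Y}=y),\qquad \mathbf{EO}_{a,y}=\mathbb{P}(\hat{Y}=Y\mid Y=y,A=a)-\mathbb{P}(\hat{Y}=Y\mid Y=y).$$ Then $$I_W(\hat{Y},A)=\frac{\sqrt[p]{2}}{2}\sum_{a\in\mathcal{A}}\mathbb{P}(A=a)\sum_{y\in\mathcal{Y}}\left|\mathbf{DP}_{a,y}\right|,$$ and, for every $y\in\mathcal{Y}$, $$I_W\big((\hat{Y}=Y)\mid Y=y,\;A\mid Y=y\big)=\sqrt[p]{2}\sum_{a\in\mathcal{A}}\mathbb{P}(A=a\mid Y=y)\left|\mathbf{EO}_{a,y}\right|.$$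
   Context: For random variables $U,V$, the Wasserstein Dependency Measure is $I_W(U,V)=W_1(p(U,V),p(U)p(V))$, where $W_1$ is the 1-Wasserstein (earth mover's) distance with respect to the ground metric, $p(U,V)$ is the joint law and $p(U)p(V)$ the product of the marginal laws. The quantity $I_W((\hat{Y}=Y)\mid Y=y, A\mid Y=y)$ denotes $W_1$ between the joint law of the binary indicator $\mathbb{1}[\hat{Y}=Y]$ and $A$ conditionally on $Y=y$, and the product of their conditional marginals given $Y=y$ (the binary indicator also being one-hot encoded). With one-hot encoding and the $\ell_p$ ground metric, two distinct values of the same variable are at distance $\sqrt[p]{2}$. *)

From HB Require Import structures.
From mathcomp Require Import all_boot all_order all_algebra.
From mathcomp Require Import all_classical all_reals all_analysis.
Set Implicit Arguments. Unset Strict Implicit. Unset Printing Implicit Defensive.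
Import Order.TTheory GRing.Theory Num.Theory.
Local Open Scope classical_set_scope.
Local Open Scope ring_scope.

Section WDM.
Variable R : realType.

Definition onehot (X : finType) (x : X) : X -> R :=
  fun s => if s == x then 1 else 0.

Definition lp_dist2 (p : R) (U V : finType) (x x' : U * V) : R :=
  (\sum_(u : U) `|onehot x.1 u - onehot x'.1 u| `^ p
   + \sum_(v : V) `|onehot x.2 v - onehot x'.2 v| `^ p) `^ p^-1.

Definition coupling (X : finType) (mu nu : X -> R) (pi : X -> X -> R) : Prop :=
  [/\ forall x y, 0 <= pi x y,
      forall x, \sum_(y : X) pi x y = mu x &
      forall y, \sum_(x : X) pi x y = nu y].

Definition W1 (X : finType) (dist : X -> X -> R) (mu nu : X -> R) : R :=
  inf [set w | exists pi, coupling mu nu pi /\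
                 w = \sum_(x : X) \sum_(y : X) pi x y * dist x y].

Definition marg1 (U V : finType) (j : U * V -> R) (u : U) : R :=
  \sum_(v : V) j (u, v).
Definition marg2 (U V : finType) (j : U * V -> R) (v : V) : R :=
  \sum_(u : U) j (u, v).

Definition IW (p : R) (U V : finType) (j : U * V -> R) : R :=
  W1 (@lp_dist2 p U V) j (fun uv => marg1 j uv.1 * marg2 j uv.2).

Variables (d : measure_display) (T : measurableType d).

Definition Pr (P : probability T R) (E : set T) : R := fine (P E).
Definition condPr (P : probability T R) (E F : set T) : R :=
  Pr P (E `&` F) / Pr P F.

Definition law2 (P : probability T R) (U V : finType) (X1 : T -> U) (X2 : T -> V)
  : U * V -> R :=
  fun uv => Pr P (X1 @^-1` [set uv.1] `&` X2 @^-1` [set uv.2]).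
Definition condlaw2 (P : probability T R) (U V : finType) (X1 : T -> U)
  (X2 : T -> V) (F : set T) : U * V -> R :=
  fun uv => condPr P (X1 @^-1` [set uv.1] `&` X2 @^-1` [set uv.2]) F.

Definition DP (P : probability T R) (SA SY : finType) (A : T -> SA)
  (Yh : T -> SY) (a : SA) (y : SY) : R :=
  condPr P (Yh @^-1` [set y]) (A @^-1` [set a]) - Pr P (Yh @^-1` [set y]).

Definition EO (P : probability T R) (SA SY : finType) (A : T -> SA)
  (Y Yh : T -> SY) (a : SA) (y : SY) : R :=
  condPr P [set w | Yh w = Y w] (Y @^-1` [set y] `&` A @^-1` [set a])
  - condPr P [set w | Yh w = Y w] (Y @^-1` [set y]).

End WDM.

From HB Require Import structures.
From mathcomp Require Import all_boot all_order all_algebra.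
From mathcomp Require Import all_classical all_reals all_analysis.
From mathcomp Require Import ring lra.
Import Order.TTheory GRing.Theory Num.Theory.
Local Open Scope classical_set_scope.
Local Open Scope ring_scope.

(* The joint law and the product of its marginals have the same first
   marginal, so mass need only move inside the fibres of the first
   coordinate, where every move costs 2^(1/p), the least distance between
   distinct one-hot pairs.  Keeping the common part of the two laws in place
   and spreading the excess of one over the deficit of the other within each
   fibre achieves this, so I_W is 2^(1/p) times the total variation distance.
   Written through the conditional laws given the second coordinate, the total
   variation becomes the DP (resp. EO) sum; for the binary indicator both
   values contribute the same amount, which doubles the constant. *)
Lemma divfK_le {R : realFieldType} {a s : R} :
  0 <= a -> a <= s -> a / s * s = a.
Proof.
move=> a0 a_le_s; have [s0|s_neq0] := eqVneq s 0; last by rewrite divfK.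
by rewrite s0 mulr0; apply/esym/le_anti; rewrite a0 -s0 a_le_s.
Qed.

Lemma normr_sub_scale (R : realFieldType) (e c m : R) : 0 <= e -> e <= c ->
  `|e - c * m| = c * `|e / c - m|.
Proof.
move=> e0 ec; rewrite -{1}(divfK_le e0 ec) [e / c * c]mulrC -mulrBr normrM.
by rewrite ger0_norm // (le_trans e0 ec).
Qed.

Section BlockTransport.
Variables (R : realType) (X B : finType) (blk : X -> B).
Variables (dist : X -> X -> R) (k : R).
Hypotheses (k_ge0 : 0 <= k) (dist_xx : forall x, dist x x = 0).
Hypothesis dist_ge : forall x y, x != y -> k <= dist x y.
Hypothesis dist_blk : forall x y, x != y -> blk x = blk y -> dist x y = k.
Variables (mu nu : X -> R).
Hypotheses (mu_ge0 : forall x, 0 <= mu x) (nu_ge0 : forall x, 0 <= nu x).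
Hypothesis mass_blk :
  forall b, \sum_(x | blk x == b) mu x = \sum_(x | blk x == b) nu x.

Let excess x := if nu x <= mu x then mu x - nu x else 0.
Let deficit x := if nu x <= mu x then 0 else nu x - mu x.
Let common x := if nu x <= mu x then nu x else mu x.

Let excess_ge0 x : 0 <= excess x.
Proof. by rewrite /excess; case: (leP (nu x) (mu x)) => h; lra. Qed.

Let deficit_ge0 x : 0 <= deficit x.
Proof. by rewrite /deficit; case: (leP (nu x) (mu x)) => h; lra. Qed.

Let common_ge0 x : 0 <= common x.
Proof. by rewrite /common; case: (leP (nu x) (mu x)). Qed.

Let common_excess x : common x + excess x = mu x.
Proof. by rewrite /common /excess; case: (leP (nu x) (mu x)) => _; ring. Qed.

Let common_deficit x : common x + deficit x = nu x.
Proof. by rewrite /common /deficit; case: (leP (nu x) (mu x)) => _; ring. Qed.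

Let excess_deficit x : excess x * deficit x = 0.
Proof. by rewrite /excess /deficit; case: (leP (nu x) (mu x)) => _; ring. Qed.

Let excessE x : excess x = (`|mu x - nu x| + (mu x - nu x)) / 2.
Proof.
rewrite /excess; case: (leP (nu x) (mu x)) => h.
  by rewrite ger0_norm; lra.
by rewrite ltr0_norm; lra.
Qed.

Let blk_excess b := \sum_(x | blk x == b) excess x.

Let sum_deficit_blk b : \sum_(x | blk x == b) deficit x = blk_excess b.
Proof.
apply/eqP; rewrite -subr_eq0 -sumrB.
rewrite (eq_bigr (fun x => nu x - mu x)) ?sumrB ?mass_blk ?subrr // => x _.
by rewrite /deficit /excess; case: (leP (nu x) (mu x)) => _; ring.
Qed.

Let excess_le_blk x : excess x <= blk_excess (blk x).
Proof. by rewrite /blk_excess (bigD1 x) //= lerDl sumr_ge0. Qed.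

Let deficit_le_blk x : deficit x <= blk_excess (blk x).
Proof. by rewrite -sum_deficit_blk (bigD1 x) //= lerDl sumr_ge0. Qed.

Let transfer x y :=
  if blk y == blk x then excess x * deficit y / blk_excess (blk x) else 0.

Let sum_transfer_row x : \sum_y transfer x y = excess x.
Proof.
rewrite -big_mkcond /=; under eq_bigr do rewrite mulrAC.
by rewrite -mulr_sumr sum_deficit_blk divfK_le.
Qed.

Let sum_transfer_col y : \sum_x transfer x y = deficit y.
Proof.
rewrite /transfer; under eq_bigr do rewrite eq_sym.
rewrite -big_mkcond /=.
under eq_bigr => x /eqP-> do rewrite -mulrA mulrC.
by rewrite -mulr_sumr divfK_le.
Qed.

Let plan x y := (if y == x then common x else 0) + transfer x y.

Let coupling_plan : coupling mu nu plan.
Proof.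
split=> [x y | x | y].
- rewrite addr_ge0 //; first by case: eqP.
  by rewrite /transfer; case: eqP => // _; rewrite !mulr_ge0 ?invr_ge0 ?sumr_ge0.
- by rewrite big_split /= sum_transfer_row -big_mkcond /= big_pred1_eq.
- rewrite big_split /= sum_transfer_col -big_mkcond /=.
  by rewrite (big_pred1 y) => [|x]; rewrite 1?eq_sym.
Qed.

Let cost_plan : \sum_x \sum_y plan x y * dist x y = k * \sum_x excess x.
Proof.
rewrite mulr_sumr; apply: eq_bigr => x _; rewrite -sum_transfer_row mulr_sumr.
apply: eq_bigr => y _; rewrite /plan.
have [->|nyx] := eqVneq y x.
  by rewrite dist_xx /transfer eqxx excess_deficit !mul0r !mulr0.
rewrite add0r /transfer; case: eqP => [/esym bxy|_]; last by rewrite mul0r mulr0.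
by rewrite mulrC dist_blk // eq_sym.
Qed.

Let cost_ge pi : coupling mu nu pi ->
  k * \sum_x excess x <= \sum_x \sum_y pi x y * dist x y.
Proof.
case=> pi_ge0 pi_row pi_col; rewrite mulr_sumr; apply: ler_sum => x _.
have pi_xx_le : pi x x <= common x.
  rewrite /common; case: (leP (nu x) (mu x)) => _.
    by rewrite -pi_col (bigD1 x) //= lerDl sumr_ge0.
  by rewrite -pi_row (bigD1 x) //= lerDl sumr_ge0.
rewrite (bigD1 x) //= dist_xx mulr0 add0r.
apply: (@le_trans _ _ (\sum_(y | y != x) pi x y * k)); last first.
  by apply: ler_sum => y yx; rewrite ler_wpM2l // dist_ge // eq_sym.
rewrite -mulr_suml mulrC ler_wpM2r //.
have := pi_row x; rewrite (bigD1 x) //= => mu_x.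
have := common_excess x; lra.
Qed.

Lemma W1_block_eq_TV : W1 dist mu nu = k / 2 * \sum_x `|mu x - nu x|.
Proof.
have mass_eq : \sum_x mu x = \sum_x nu x.
  rewrite !(partition_big blk xpredT) //.
  by apply: eq_bigr => b _; apply: mass_blk.
have -> : k / 2 * \sum_x `|mu x - nu x| = k * \sum_x excess x.
  rewrite [in RHS](eq_bigr _ (fun x _ => excessE x)).
  by rewrite -mulr_suml big_split /= sumrB mass_eq subrr addr0 mulrA mulrAC.
rewrite /W1; set E := [set w | _].
have E_cost : E (k * \sum_x excess x) by exists plan; rewrite cost_plan.
have E_lb : lbound E (k * \sum_x excess x) by move=> _ [pi [c ->]]; exact: cost_ge.
by apply: le_anti; rewrite ge_inf ?lb_le_inf //; exists (k * \sum_x excess x).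
Qed.

End BlockTransport.

Section OneHotMetric.
Variables (R : realType) (p : R).
Hypothesis p_ge1 : 1 <= p.

Let p_gt0 : 0 < p. Proof. exact: lt_le_trans ltr01 p_ge1. Qed.

Lemma sum_onehot_dist (X : finType) (a b : X) :
  \sum_u `|onehot R a u - onehot R b u| `^ p = if a == b then 0 else 2.
Proof.
have [<-|nab] := eqVneq a b.
  by rewrite big1 // => u _; rewrite subrr normr0 powR0 // gt_eqF.
rewrite (bigD1 a) //= (bigD1 b) 1?eq_sym //= big1 => [|u /andP[ua ub]].
  rewrite /onehot eqxx (negbTE nab) eq_sym (negbTE nab) eqxx subr0 sub0r.
  by rewrite normrN normr1 powR1 addr0.
by rewrite /onehot (negbTE ua) (negbTE ub) subrr normr0 powR0 // gt_eqF.
Qed.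

Lemma lp_dist2E (U V : finType) (x y : U * V) : lp_dist2 p x y =
  ((if x.1 == y.1 then 0 else 2) + (if x.2 == y.2 then 0 else 2)) `^ p^-1.
Proof. by rewrite /lp_dist2 !sum_onehot_dist. Qed.

Lemma lp_dist2_xx (U V : finType) (x : U * V) : lp_dist2 p x x = 0.
Proof. by rewrite lp_dist2E !eqxx addr0 powR0 // invr_eq0 gt_eqF. Qed.

Lemma lp_dist2_fst (U V : finType) (x y : U * V) : x != y -> x.1 = y.1 ->
  lp_dist2 p x y = 2 `^ p^-1.
Proof.
move=> nxy e1; rewrite lp_dist2E e1 eqxx add0r.
have [e2|//] := eqVneq x.2 y.2.
by move: nxy; rewrite -pair_eqE /pair_eq e1 e2 !eqxx.
Qed.

Lemma lp_dist2_ge (U V : finType) (x y : U * V) : x != y ->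
  2 `^ p^-1 <= lp_dist2 p x y.
Proof.
move=> nxy; rewrite lp_dist2E.
apply: ge0_ler_powR; rewrite ?nnegrE ?invr_ge0 ?(ltW p_gt0) //.
- by case: ifP; case: ifP => _ _; lra.
have [e1|_] := eqVneq x.1 y.1; have [e2|_] := eqVneq x.2 y.2; try lra.
by move: nxy; rewrite -pair_eqE /pair_eq e1 e2 !eqxx.
Qed.

End OneHotMetric.

Section Marginals.
Variables (R : realType) (U V : finType) (j : U * V -> R).

Lemma sum_fst_eq (f : U * V -> R) (u : U) :
  \sum_(x | x.1 == u) f x = \sum_v f (u, v).
Proof.
transitivity (\sum_(a | a == u) \sum_v f (a, v)); last by rewrite big_pred1_eq.
by rewrite pair_big_dep; apply: eq_big => -[a b] //=; rewrite andbT.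
Qed.

Lemma sum_pair (f : U * V -> R) : \sum_x f x = \sum_u \sum_v f (u, v).
Proof. by rewrite pair_big; apply: eq_bigr => -[]. Qed.

Lemma sum_marg1 : \sum_u marg1 j u = \sum_x j x.
Proof. by rewrite sum_pair. Qed.

Lemma sum_marg2 : \sum_v marg2 j v = \sum_x j x.
Proof. by rewrite sum_pair exchange_big. Qed.

End Marginals.

Lemma IW_eq_TV (R : realType) (p : R) (U V : finType) (j : U * V -> R) :
  1 <= p -> (forall x, 0 <= j x) -> \sum_x j x = 1 ->
  IW p j = 2 `^ p^-1 / 2 * \sum_x `|j x - marg1 j x.1 * marg2 j x.2|.
Proof.
move=> p_ge1 j_ge0 j_sum1; apply: (@W1_block_eq_TV _ _ _ fst).
- exact: powR_ge0.
- exact: lp_dist2_xx.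
- exact: lp_dist2_ge.
- exact: lp_dist2_fst.
- exact: j_ge0.
- by move=> x; rewrite mulr_ge0 ?sumr_ge0.
- by move=> u; rewrite !sum_fst_eq /= -mulr_sumr sum_marg2 j_sum1 mulr1.
Qed.

Section ConditionalProbability.
Variables (R : realType) (d : measure_display) (T : measurableType d).
Variable P : probability T R.

Lemma Pr_ge0 E : 0 <= Pr P E.
Proof. exact/fine_ge0/measure_ge0. Qed.

Lemma condPr_ge0 E F : 0 <= condPr P E F.
Proof. by rewrite divr_ge0 ?Pr_ge0. Qed.

Lemma le_Pr E F : measurable E -> measurable F -> E `<=` F -> Pr P E <= Pr P F.
Proof.
move=> mE mF EF; rewrite fine_le ?fin_num_measure //.
by rewrite le_measure ?inE.
Qed.

Lemma PrT : Pr P setT = 1.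
Proof. by rewrite /Pr probability_setT. Qed.

Lemma condPrT E : condPr P E setT = Pr P E.
Proof. by rewrite /condPr setIT PrT divr1. Qed.

Lemma Pr_partition {U : finType} (X : T -> U) G :
  (forall u, measurable (X @^-1` [set u])) -> measurable G ->
  \sum_u Pr P (X @^-1` [set u] `&` G) = Pr P G.
Proof.
move=> mX mG.
have -> : Pr P G = Pr P (\bigcup_(u in setT) (X @^-1` [set u] `&` G)).
  by congr (Pr P _); apply/seteqP; split=> [w Gw|w [u _ []]//]; exists (X w).
rewrite /Pr measure_fin_bigcup //.
- rewrite (fsbigE (index_enum U)) ?index_enum_uniq //=; last first.
    by move=> u _; rewrite mem_index_enum.
  rewrite (eq_bigl (fun u => u \in [set: U])) => [|u]; last by rewrite in_setT.
  by apply: sum_fine => u _; rewrite fin_num_measure //; exact: measurableI.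
- exact: finite_finset.
- by move=> u v _ _ [w [[/= <- _] [/= <- _]]].
- by move=> u _; exact: measurableI.
Qed.

Lemma measurable_set_eq {U : finType} (f g : T -> U) :
  (forall u, measurable (f @^-1` [set u])) ->
  (forall u, measurable (g @^-1` [set u])) ->
  measurable [set w | f w = g w].
Proof.
move=> mf mg.
have -> : [set w | f w = g w] =
    \bigcup_(u in setT) (f @^-1` [set u] `&` g @^-1` [set u]).
  by apply/seteqP; split=> [w e|w [u _ [/= -> ->]]] //; exists (f w).
apply: fin_bigcup_measurable => [|u _]; first exact: finite_finset.
exact: measurableI.
Qed.

Lemma measurable_eqb {U : finType} (f g : T -> U) :
  (forall u, measurable (f @^-1` [set u])) ->
  (forall u, measurable (g @^-1` [set u])) ->
  forall b, measurable ((fun w => f w == g w) @^-1` [set b]).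
Proof.
move=> mf mg; have mfg := measurable_set_eq f g mf mg; case.
  by rewrite (_ : _ @^-1` _ = [set w | f w = g w]) //; apply/seteqP; split=> w /eqP.
rewrite (_ : _ @^-1` _ = ~` [set w | f w = g w]); first exact: measurableC.
by apply/seteqP; split=> w /=; [move/negbT/eqP | move/eqP/negbTE].
Qed.

Section PairLaw.
Variables (U V : finType) (X1 : T -> U) (X2 : T -> V) (F : set T).
Hypotheses (mX1 : forall u, measurable (X1 @^-1` [set u]))
  (mX2 : forall v, measurable (X2 @^-1` [set v])) (mF : measurable F).

Lemma marg1_condlaw2 u :
  marg1 (condlaw2 P X1 X2 F) u = condPr P (X1 @^-1` [set u]) F.
Proof.
rewrite /marg1 /condlaw2 /condPr -mulr_suml.
rewrite -(Pr_partition X2 (X1 @^-1` [set u] `&` F) mX2); last exact: measurableI.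
by congr (_ / _); apply: eq_bigr => v _; rewrite setIA (setIC (X2 @^-1` _)).
Qed.

Lemma marg2_condlaw2 v :
  marg2 (condlaw2 P X1 X2 F) v = condPr P (X2 @^-1` [set v]) F.
Proof.
rewrite /marg2 /condlaw2 /condPr -mulr_suml.
rewrite -(Pr_partition X1 (X2 @^-1` [set v] `&` F) mX1); last exact: measurableI.
by congr (_ / _); apply: eq_bigr => u _; rewrite setIA.
Qed.

Lemma sum_condlaw2 : Pr P F != 0 -> \sum_x condlaw2 P X1 X2 F x = 1.
Proof.
move=> PF; rewrite -sum_marg1; under eq_bigr do rewrite marg1_condlaw2.
by rewrite -mulr_suml (Pr_partition X1 F mX1 mF) divff.
Qed.

Lemma IW_condlaw2 (p : R) : 1 <= p -> Pr P F != 0 ->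
  IW p (condlaw2 P X1 X2 F) = 2 `^ p^-1 / 2 *
    \sum_v condPr P (X2 @^-1` [set v]) F *
      \sum_u `|condPr P (X1 @^-1` [set u]) (X2 @^-1` [set v] `&` F)
               - condPr P (X1 @^-1` [set u]) F|.
Proof.
move=> p_ge1 PF; rewrite IW_eq_TV ?sum_condlaw2 //; last first.
  by move=> x; exact: condPr_ge0.
congr (_ * _); rewrite sum_pair exchange_big /=; apply: eq_bigr => v _.
rewrite mulr_sumr; apply: eq_bigr => u _ /=.
rewrite marg1_condlaw2 marg2_condlaw2 mulrC normr_sub_scale ?condPr_ge0 //.
  by rewrite /condlaw2 /condPr invf_div mulrA divfK // setIA.
rewrite /condlaw2 /condPr ler_wpM2r ?invr_ge0 ?Pr_ge0 // le_Pr //.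
- by apply: measurableI => //; exact: measurableI.
- exact: measurableI.
- by move=> w [[_ ?] ?].
Qed.

End PairLaw.

Lemma condPr_false (B : T -> bool) G :
  (forall b, measurable (B @^-1` [set b])) -> measurable G -> Pr P G != 0 ->
  condPr P (B @^-1` [set false]) G = 1 - condPr P (B @^-1` [set true]) G.
Proof.
move=> mB mG PG.
have := Pr_partition B G mB mG; rewrite big_bool /= => PG_split.
rewrite /condPr; have -> : Pr P (B @^-1` [set false] `&` G) =
    Pr P G - Pr P (B @^-1` [set true] `&` G) by lra.
by rewrite mulrBl divff.
Qed.

Lemma sum_condPr_bool (B : T -> bool) G H :
  (forall b, measurable (B @^-1` [set b])) -> measurable G -> measurable H ->
  Pr P G != 0 -> Pr P H != 0 ->
  \sum_b `|condPr P (B @^-1` [set b]) G - condPr P (B @^-1` [set b]) H| =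
  2 * `|condPr P (B @^-1` [set true]) G - condPr P (B @^-1` [set true]) H|.
Proof.
move=> mB mG mH PG PH; rewrite big_bool /= !condPr_false //.
set a := condPr P _ G; set b := condPr P _ H.
by rewrite (_ : 1 - a - (1 - b) = - (a - b)) ?normrN; [lra | ring].
Qed.

Lemma IW_condlaw2_bool (p : R) (V : finType) (B : T -> bool) (X2 : T -> V) F :
  1 <= p -> (forall b, measurable (B @^-1` [set b])) ->
  (forall v, measurable (X2 @^-1` [set v])) -> measurable F -> Pr P F != 0 ->
  IW p (condlaw2 P B X2 F) = 2 `^ p^-1 *
    \sum_v condPr P (X2 @^-1` [set v]) F *
      `|condPr P (B @^-1` [set true]) (X2 @^-1` [set v] `&` F)
        - condPr P (B @^-1` [set true]) F|.
Proof.
move=> p_ge1 mB mX2 mF PF; rewrite IW_condlaw2 // !mulr_sumr.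
apply: eq_bigr => v _.
have [PvF0|PvF] := eqVneq (Pr P (X2 @^-1` [set v] `&` F)) 0.
  by rewrite /condPr PvF0 !mul0r !mulr0.
rewrite sum_condPr_bool //; last exact: measurableI.
by rewrite [_ * (2 * _)]mulrCA (mulrA (_ / 2)) divfK.
Qed.

End ConditionalProbability.

Theorem lemma1 (R : realType) (d : measure_display) (T : measurableType d)
  (P : probability T R) (SA SY : finType)
  (A : T -> SA) (Y Yh : T -> SY)
  (mA : forall a, measurable (A @^-1` [set a]))
  (mY : forall y, measurable (Y @^-1` [set y]))
  (mYh : forall y, measurable (Yh @^-1` [set y]))
  (p : R) (hp : 1 <= p) :
  IW p (law2 P Yh A)
    = (2 `^ p^-1) / 2 *
      \sum_(a : SA) Pr P (A @^-1` [set a]) * \sum_(y : SY) `|DP P A Yh a y|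
  /\
  (forall y : SY, 0 < Pr P (Y @^-1` [set y]) ->
    IW p (condlaw2 P (fun w => Yh w == Y w) A (Y @^-1` [set y]))
      = (2 `^ p^-1) *
        \sum_(a : SA) condPr P (A @^-1` [set a]) (Y @^-1` [set y])
                      * `|EO P A Y Yh a y|).
Proof.
split.
- have -> : law2 P Yh A = condlaw2 P Yh A setT.
    by apply/funext => x; rewrite /condlaw2 condPrT.
  rewrite IW_condlaw2 ?PrT ?oner_neq0 //.
  congr (_ * _); apply: eq_bigr => a _; rewrite condPrT setIT.
  by congr (_ * _); apply: eq_bigr => y _; rewrite condPrT.
move=> y PF.
have Yh_eq_Y :
    (fun w => Yh w == Y w) @^-1` [set true] = [set w | Yh w = Y w].
  by apply/seteqP; split=> w /eqP.
rewrite IW_condlaw2_bool ?lt0r_neq0 //; last exact: measurable_eqb.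
by congr (_ * _); apply: eq_bigr => a _; rewrite /EO Yh_eq_Y setIC.
Qed.
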